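(* Let $(G,t)$ be a problem instance, let $X$ be a tidy modulator of $G$, and let $C$ be a connected component of $G-X$ such that (1) $N_G(C)$ is a limit-2 clique for $(G-V(C),t)$, and (2) for every pair $\{x,y\}\subseteq N_G(C)$, either $\mathrm{tw}(G[V(C)\cup\{x,y\}])\le 2$ or $\{x,y\}$ is a limit-1 subset for $(G-V(C),t)$. Then $(G,t)$ has a solution if and only if $(G-V(C),t)$ has a solution.
   Context: $\mathrm{tw}$ is treewidth. A problem instance is a pair $(G,t)$ with $G$ a graph and $t\in\mathbb{N}$; a solution is $S\subseteq V(G)$ with $|S|\le t$ and $\mathrm{tw}(G-S)\le 2$. A modulator of $G$ is $X$ with $\mathrm{tw}(G-X)\le 2$; a tidy modulator additionally satisfies $\mathrm{tw}(G-(X\setminus\{x\}))\le 2$ for all $x\in X$. A set $Z$ is a limit-$m$ subset for $(G,t)$ if every solution $S$ for $(G,t)$ has $|Z\setminus S|\le m$; it is a limit-$m$ clique if also $G[Z]$ is a clique. $N_G(C)$ is the set of vertices outside $C$ adjacent to $C$. *)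

(* A graph G is a symmetric irreflexive relation e on a finType T;
   subgraphs G[W] are given by vertex sets W : {set T}. *)
From mathcomp Require Import all_boot.
Set Implicit Arguments. Unset Strict Implicit. Unset Printing Implicit Defensive.

Section Graphs.
Variables (T : finType) (e : rel T).

Definition is_tree (n : nat) (tr : rel 'I_n.+1) : Prop :=
  [/\ symmetric tr, irreflexive tr,
      (forall i j, connect tr i j) &
      (forall i j, tr i j ->
         ~~ connect [rel a b | tr a b && ([set a; b] != [set i; j])] i j)].

Definition tree_decomp_of_width (W : {set T}) (k : nat)
    (n : nat) (tr : rel 'I_n.+1) (B : 'I_n.+1 -> {set T}) : Prop :=
  [/\ is_tree tr,
      (forall i, B i \subset W) /\ (forall i, #|B i| <= k.+1),
      (forall v, v \in W -> exists i, v \in B i),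
      (forall u v, u \in W -> v \in W -> e u v -> exists i, (u \in B i) && (v \in B i)) &
      (forall v i j, v \in B i -> v \in B j ->
         connect [rel a b | [&& tr a b, v \in B a & v \in B b]] i j)].

Definition tw_le (W : {set T}) (k : nat) : Prop :=
  exists n (tr : rel 'I_n.+1) (B : 'I_n.+1 -> {set T}), tree_decomp_of_width W k tr B.

Definition solution (W : {set T}) (t : nat) (S : {set T}) : Prop :=
  [/\ S \subset W, #|S| <= t & tw_le (W :\: S) 2].

Definition modulator (X : {set T}) : Prop := tw_le (~: X) 2.

Definition tidy_modulator (X : {set T}) : Prop :=
  modulator X /\ (forall x, x \in X -> tw_le (~: (X :\ x)) 2).

Definition component_of (W C : {set T}) : Prop :=
  [/\ C \subset W, C != set0,
      (forall u v, u \in C -> v \in C ->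
         connect [rel a b | [&& e a b, a \in C & b \in C]] u v) &
      (forall u v, u \in C -> v \in W :\: C -> ~~ e u v)].

Definition nbhd (C : {set T}) : {set T} :=
  [set v | (v \notin C) && [exists u in C, e u v]].

Definition limit_subset (W : {set T}) (t m : nat) (Z : {set T}) : Prop :=
  forall S, solution W t S -> #|Z :\: S| <= m.

Definition limit_clique (W : {set T}) (t m : nat) (Z : {set T}) : Prop :=
  limit_subset W t m Z /\ (forall u v, u \in Z -> v \in Z -> u != v -> e u v).

End Graphs.

From mathcomp Require Import all_boot.

Set Implicit Arguments. Unset Strict Implicit. Unset Printing Implicit Defensive.

(* Removing C from a solution of (G, t) gives a solution of (G - C, t).  Conversely,
   let S solve (G - C, t) and K := N(C) \ S; by the limit-2 hypothesis K is a clique of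
   at most two vertices.  Then tw(G[C u K]) <= 2: when |K| <= 1 because X is tidy and
   N(C) is inside X, and when |K| = 2 by condition (2), whose limit-1 alternative would
   contradict |K \ S| = 2.  Since K separates C from the rest of G - S, a decomposition
   of G[C u K] and one of G - C - S, joined by an edge between two bags containing K,
   form a decomposition of G - S of width at most 2. *)

Lemma connect_homo (T1 T2 : finType) (r1 : rel T1) (r2 : rel T2) (f : T1 -> T2) :
  (forall a b, r1 a b -> connect r2 (f a) (f b)) ->
  forall x y, connect r1 x y -> connect r2 (f x) (f y).
Proof.
move=> r12 x y /connectP[p]; elim: p x => [|z p IHp] x /=; first by move=> _ ->.
by case/andP=> /r12 xz /IHp zy /zy; apply: connect_trans.
Qed.

Lemma card_le2_cases (T : finType) (K : {set T}) : #|K| <= 2 ->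
  [\/ K = set0, exists x, K = [set x] | exists x y, x != y /\ K = [set x; y]].
Proof.
move=> K_le2; have [] : [\/ #|K| == 0, #|K| == 1 | #|K| == 2].
  by case: #|K| K_le2 => [|[|[|]]]; constructor.
- by rewrite cards_eq0 => /eqP; constructor 1.
- by move/cards1P; constructor 2.
- by move/cards2P; constructor 3.
Qed.

Lemma imset_set2 (aT rT : finType) (f : aT -> rT) (x y : aT) :
  f @: [set x; y] = [set f x; f y].
Proof. by rewrite imsetU1 imset_set1. Qed.

Definition del_edge (U : finType) (r : rel U) (i j : U) : rel U :=
  [rel a b | r a b && ([set a; b] != [set i; j])].

Section GluedTree.
Variables (n1 n2 : nat) (tr1 : rel 'I_n1.+1) (tr2 : rel 'I_n2.+1).
Variables (i1 : 'I_n1.+1) (i2 : 'I_n2.+1).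

Local Notation node := 'I_(n1.+1 + n2.+1).
Local Notation lnode := (@lshift n1.+1 n2.+1).
Local Notation rnode := (@rshift n1.+1 n2.+1).

Definition glued_tree (x y : node) : bool :=
  match split x, split y with
  | inl a, inl b => tr1 a b
  | inr a, inr b => tr2 a b
  | inl a, inr b => (a == i1) && (b == i2)
  | inr a, inl b => (a == i2) && (b == i1)
  end.

Definition on_left (x : node) : bool := if split x is inl _ then true else false.

Lemma split_lnode a : split (lnode a) = inl a. Proof. exact: (unsplitK (inl a)). Qed.
Lemma split_rnode b : split (rnode b) = inr b. Proof. exact: (unsplitK (inr b)). Qed.

Lemma node_ind (P : node -> Prop) :
  (forall a, P (lnode a)) -> (forall b, P (rnode b)) -> forall x, P x.
Proof. by move=> Pl Pr x; case: (split_ordP x) => a ->. Qed.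

Lemma glued_tree_ll a b : glued_tree (lnode a) (lnode b) = tr1 a b.
Proof. by rewrite /glued_tree !split_lnode. Qed.
Lemma glued_tree_rr a b : glued_tree (rnode a) (rnode b) = tr2 a b.
Proof. by rewrite /glued_tree !split_rnode. Qed.
Lemma glued_tree_lr a b : glued_tree (lnode a) (rnode b) = (a == i1) && (b == i2).
Proof. by rewrite /glued_tree split_lnode split_rnode. Qed.
Lemma glued_tree_rl a b : glued_tree (rnode a) (lnode b) = (a == i2) && (b == i1).
Proof. by rewrite /glued_tree split_lnode split_rnode. Qed.
Lemma on_left_l a : on_left (lnode a). Proof. by rewrite /on_left split_lnode. Qed.
Lemma on_left_r b : on_left (rnode b) = false. Proof. by rewrite /on_left split_rnode. Qed.

Definition glued_treeE :=
  (glued_tree_ll, glued_tree_rr, glued_tree_lr, glued_tree_rl, on_left_l, on_left_r).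

Lemma glued_tree_cross x y : glued_tree x y -> on_left x != on_left y ->
  [set x; y] = [set lnode i1; rnode i2].
Proof.
elim/node_ind: x => a; elim/node_ind: y => b; rewrite !glued_treeE //.
  by case/andP=> /eqP-> /eqP->.
by case/andP=> /eqP-> /eqP->; rewrite setUC.
Qed.

Lemma on_left_closed x y : glued_tree x y -> on_left x != on_left y ->
  closed (del_edge glued_tree x y) on_left.
Proof.
move=> xy side u v /andP[uv]; apply: contraNeq => side_uv.
by rewrite (glued_tree_cross uv side_uv) (glued_tree_cross xy side).
Qed.

(* Collapsing the other tree onto [i1] (resp. [i2]) turns walks avoiding an edge of
   [tr1] (resp. [tr2]) in the glued tree into walks avoiding it in [tr1] (resp. [tr2]). *)
Definition proj_left (x : node) : 'I_n1.+1 := if split x is inl a then a else i1.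
Definition proj_right (x : node) : 'I_n2.+1 := if split x is inr b then b else i2.

Lemma proj_left_connect a b x y : connect (del_edge glued_tree (lnode a) (lnode b)) x y ->
  connect (del_edge tr1 a b) (proj_left x) (proj_left y).
Proof.
apply: connect_homo => {x y}; elim/node_ind => x; elim/node_ind => y;
  rewrite /proj_left ?split_lnode ?split_rnode => /andP[]; rewrite !glued_treeE => xy xy_ab;
  try by [exact: connect0 | case/andP: xy => /eqP-> _ | case/andP: xy => _ /eqP->].
apply/connect1/andP; split=> //; apply: contra xy_ab => /eqP xy_ab.
by rewrite -!imset_set2 xy_ab.
Qed.

Lemma proj_right_connect a b x y : connect (del_edge glued_tree (rnode a) (rnode b)) x y ->
  connect (del_edge tr2 a b) (proj_right x) (proj_right y).
Proof.
apply: connect_homo => {x y}; elim/node_ind => x; elim/node_ind => y;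
  rewrite /proj_right ?split_lnode ?split_rnode => /andP[]; rewrite !glued_treeE => xy xy_ab;
  try by [exact: connect0 | case/andP: xy => /eqP-> _ | case/andP: xy => _ /eqP->].
apply/connect1/andP; split=> //; apply: contra xy_ab => /eqP xy_ab.
by rewrite -!imset_set2 xy_ab.
Qed.

Lemma glued_tree_sym : symmetric tr1 -> symmetric tr2 -> symmetric glued_tree.
Proof.
move=> sym1 sym2; elim/node_ind => a; elim/node_ind => b;
  by rewrite !glued_treeE 1?andbC.
Qed.

Lemma glued_tree_is_tree : is_tree tr1 -> is_tree tr2 -> @is_tree (n1 + n2.+1) glued_tree.
Proof.
move=> [sym1 irr1 conn1 min1] [sym2 irr2 conn2 min2].
have sym := glued_tree_sym sym1 sym2.
split=> //.
- by elim/node_ind => a; rewrite glued_treeE ?irr1 ?irr2.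
- have to_i1 x : connect glued_tree x (lnode i1).
    elim/node_ind: x => a.
      by apply: connect_homo (conn1 a i1) => x y xy; rewrite connect1 ?glued_treeE.
    apply: (@connect_trans _ _ (rnode i2)); last by rewrite connect1 ?glued_treeE ?eqxx.
    by apply: connect_homo (conn2 a i2) => x y xy; rewrite connect1 ?glued_treeE.
  by move=> x y; rewrite (connect_trans (to_i1 x)) // sym_connect_sym.
- move=> x y xy; have [side|cross] := eqVneq (on_left x) (on_left y); last first.
    by apply/negP => /(closed_connect (on_left_closed xy cross)); apply/eqP.
  move: side xy; elim/node_ind: x => a; elim/node_ind: y => b; rewrite !glued_treeE //.
  + by move=> _ /min1; apply: contra => /proj_left_connect; rewrite /proj_left !split_lnode.
  + by move=> _ /min2; apply: contra => /proj_right_connect; rewrite /proj_right !split_rnode.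
Qed.
End GluedTree.

Section Treewidth.
Variables (T : finType) (e : rel T).

Definition clique (K : {set T}) : Prop := {in K &, forall u v, u != v -> e u v}.

Lemma tw_le_subset (W W' : {set T}) k : tw_le e W k -> W' \subset W -> tw_le e W' k.
Proof.
move=> [n [tr [B [tree [B_sub B_card] cover edges bags_conn]]]] sW'.
exists n, tr, (fun i => B i :&: W'); split=> //.
- split=> i; first exact: subsetIr.
  exact: leq_trans (subset_leq_card (subsetIl _ _)) (B_card i).
- move=> v vW'; have [i vi] := cover v (subsetP sW' v vW').
  by exists i; rewrite inE vi.
- move=> u v uW' vW' /(edges u v (subsetP sW' _ uW') (subsetP sW' _ vW')) [i /andP[ui vi]].
  by exists i; rewrite !inE ui vi uW' vW'.
- move=> v i j; rewrite !inE => /andP[vi vW'] /andP[vj _].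
  apply: connect_sub (bags_conn v i j vi vj) => a b /and3P[ab va vb].
  by rewrite connect1 //= !inE ab va vb vW'.
Qed.

Lemma small_clique_in_bag (W K : {set T}) k n (tr : rel 'I_n.+1) (B : 'I_n.+1 -> {set T}) :
  tree_decomp_of_width e W k tr B -> K \subset W -> #|K| <= 2 -> clique K ->
  exists i, K \subset B i.
Proof.
move=> [_ _ cover edges _] /[swap] /card_le2_cases[-> | [x ->] | [x [y [xy ->]]]] KW K_clique.
- by exists ord0; apply: sub0set.
- by have [i xi] := cover x (subsetP KW _ (set11 x)); exists i; rewrite sub1set.
- have xK : x \in [set x; y] by rewrite set21.
  have yK : y \in [set x; y] by rewrite set22.
  have [i /andP[xi yi]] := edges x y (subsetP KW _ xK) (subsetP KW _ yK) (K_clique _ _ xK yK xy).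
  by exists i; rewrite subUset !sub1set xi yi.
Qed.
End Treewidth.

Section CliqueSum.
Variables (T : finType) (e : rel T).
Hypothesis e_sym : symmetric e.
Variables (A1 A2 : {set T}) (k n1 n2 : nat).
Variables (tr1 : rel 'I_n1.+1) (tr2 : rel 'I_n2.+1).
Variables (B1 : 'I_n1.+1 -> {set T}) (B2 : 'I_n2.+1 -> {set T}).
Variables (i1 : 'I_n1.+1) (i2 : 'I_n2.+1).
Hypotheses (D1 : tree_decomp_of_width e A1 k tr1 B1) (D2 : tree_decomp_of_width e A2 k tr2 B2).
Hypotheses (A12_sub_B1 : A1 :&: A2 \subset B1 i1) (A12_sub_B2 : A1 :&: A2 \subset B2 i2).
Hypothesis no_cross_edge : forall u v, u \in A1 :\: A2 -> v \in A2 :\: A1 -> ~~ e u v.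

Local Notation node := 'I_(n1.+1 + n2.+1).
Local Notation lnode := (@lshift n1.+1 n2.+1).
Local Notation rnode := (@rshift n1.+1 n2.+1).
Local Notation gtr := (glued_tree tr1 tr2 i1 i2).

Definition glued_bag (x : node) : {set T} :=
  match split x with inl a => B1 a | inr b => B2 b end.

Lemma glued_bag_l a : glued_bag (lnode a) = B1 a.
Proof. by rewrite /glued_bag split_lnode. Qed.
Lemma glued_bag_r b : glued_bag (rnode b) = B2 b.
Proof. by rewrite /glued_bag split_rnode. Qed.

Lemma glued_bags_connect v x y : v \in glued_bag x -> v \in glued_bag y ->
  connect [rel a b | [&& gtr a b, v \in glued_bag a & v \in glued_bag b]] x y.
Proof.
case: D1 D2 => [[sym1 _ _ _] [B1_sub _] _ _ conn1] [[sym2 _ _ _] [B2_sub _] _ _ conn2].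
set r := [rel a b | _].
have r_sym : connect_sym r.
  apply: sym_connect_sym => a b /=.
  by rewrite glued_tree_sym // (andbC (v \in glued_bag a)).
have conn_l a b : v \in B1 a -> v \in B1 b -> connect r (lnode a) (lnode b).
  move=> va vb; apply: connect_homo (conn1 v a b va vb) => c d /and3P[cd vc vd].
  by rewrite connect1 //= glued_treeE !glued_bag_l cd vc vd.
have conn_r a b : v \in B2 a -> v \in B2 b -> connect r (rnode a) (rnode b).
  move=> va vb; apply: connect_homo (conn2 v a b va vb) => c d /and3P[cd vc vd].
  by rewrite connect1 //= glued_treeE !glued_bag_r cd vc vd.
have conn_lr a b : v \in B1 a -> v \in B2 b -> connect r (lnode a) (rnode b).
  move=> va vb.
  have vA12 : v \in A1 :&: A2 by rewrite inE (subsetP (B1_sub a)) ?(subsetP (B2_sub b)).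
  have v1 := subsetP A12_sub_B1 v vA12; have v2 := subsetP A12_sub_B2 v vA12.
  apply: connect_trans (conn_l a i1 va v1) (connect_trans _ (conn_r i2 b v2 vb)).
  by rewrite connect1 //= glued_treeE glued_bag_l glued_bag_r !eqxx v1 v2.
elim/node_ind: x => a; elim/node_ind: y => b;
  rewrite ?glued_bag_l ?glued_bag_r => va vb; [exact: conn_l | | rewrite r_sym |];
  by [apply: conn_lr | apply: conn_r].
Qed.

Lemma edge_in_side u v : u \in A1 :|: A2 -> v \in A1 :|: A2 -> e u v ->
  u \in A1 /\ v \in A1 \/ u \in A2 /\ v \in A2.
Proof.
move: (@no_cross_edge u v) (@no_cross_edge v u); rewrite !inE e_sym => + + + + uv.
rewrite uv; case: (u \in A1) (u \in A2) (v \in A1) (v \in A2) => [] [] [] [] //=;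
  by [left | right | move=> /(_ isT isT) | move=> _ /(_ isT isT)].
Qed.

Lemma glued_decomp :
  @tree_decomp_of_width T e (A1 :|: A2) k (n1 + n2.+1) gtr glued_bag.
Proof.
case: D1 D2 => [tree1 [B1_sub B1_card] cover1 edges1 _] [tree2 [B2_sub B2_card] cover2 edges2 _].
split.
- exact: glued_tree_is_tree.
- split; elim/node_ind => a; rewrite ?glued_bag_l ?glued_bag_r.
  + exact: subset_trans (B1_sub a) (subsetUl _ _).
  + exact: subset_trans (B2_sub a) (subsetUr _ _).
  + exact: B1_card.
  + exact: B2_card.
- move=> v; rewrite inE => /orP[/cover1[a va] | /cover2[b vb]].
    by exists (lnode a); rewrite glued_bag_l.
  by exists (rnode b); rewrite glued_bag_r.
- move=> u v uA vA uv; have [[uA1 vA1] | [uA2 vA2]] := edge_in_side uA vA uv.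
  + by have [a /andP[ua va]] := edges1 u v uA1 vA1 uv; exists (lnode a); rewrite glued_bag_l ua va.
  + by have [b /andP[ub vb]] := edges2 u v uA2 vA2 uv; exists (rnode b); rewrite glued_bag_r ub vb.
- exact: glued_bags_connect.
Qed.

End CliqueSum.

Lemma tw_le_clique_sum (T : finType) (e : rel T) (A1 A2 : {set T}) k :
  symmetric e -> tw_le e A1 k -> tw_le e A2 k ->
  #|A1 :&: A2| <= 2 -> clique e (A1 :&: A2) ->
  (forall u v, u \in A1 :\: A2 -> v \in A2 :\: A1 -> ~~ e u v) ->
  tw_le e (A1 :|: A2) k.
Proof.
move=> e_sym [n1 [tr1 [B1 D1]]] [n2 [tr2 [B2 D2]]] A12_card A12_clique no_cross.
have [i1 sub1] := small_clique_in_bag D1 (subsetIl _ _) A12_card A12_clique.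
have [i2 sub2] := small_clique_in_bag D2 (subsetIr _ _) A12_card A12_clique.
by exists (n1 + n2.+1), (glued_tree tr1 tr2 i1 i2), (glued_bag B1 B2); apply: glued_decomp.
Qed.

Section Reduction.
Variables (T : finType) (e : rel T).

Lemma solution_restrict (W W' S : {set T}) t :
  W \subset W' -> solution e W' t S -> solution e W t (S :&: W).
Proof.
move=> sWW' [_ S_card tw_rest]; split; first exact: subsetIr.
  exact: leq_trans (subset_leq_card (subsetIl _ _)) S_card.
by apply: tw_le_subset tw_rest _; rewrite setDIr setDv setU0 setSD.
Qed.

Lemma nbhd_component_sub (W C : {set T}) : component_of e W C -> nbhd e C \subset ~: W.
Proof.
move=> [_ _ _ no_exit]; apply/subsetP => x; rewrite !inE => /andP[xC /exists_inP[u uC ux]].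
by apply: contraL ux => xW; apply: no_exit; rewrite // inE xC.
Qed.

Lemma tw_le_add1_tidy (X C K : {set T}) :
  tidy_modulator e X -> C \subset ~: X -> K \subset X -> #|K| <= 1 -> tw_le e (C :|: K) 2.
Proof.
move=> [modX tidyX] C_X K_X; rewrite leq_eqVlt ltnS leqn0 cards_eq0.
case/orP=> [/cards1P[x K_x] | /eqP->]; last by rewrite setU0; apply: tw_le_subset modX C_X.
have xX : x \in X by apply: (subsetP K_X); rewrite K_x set11.
apply: tw_le_subset (tidyX x xX) _; rewrite K_x subUset sub1set !inE eqxx andbT.
by apply: subset_trans C_X _; rewrite setCS subsetDl.
Qed.

Lemma tw_le_component_nbhd_rest (X C S : {set T}) t :
  tidy_modulator e X -> component_of e (~: X) C -> solution e (~: C) t S ->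
  #|nbhd e C :\: S| <= 2 ->
  (forall x y, x \in nbhd e C -> y \in nbhd e C -> x != y ->
     tw_le e (C :|: [set x; y]) 2 \/ limit_subset e (~: C) t 1 [set x; y]) ->
  tw_le e (C :|: (nbhd e C :\: S)) 2.
Proof.
move=> tidyX compC solS + pairs; set K := nbhd e C :\: S.
have K_N : K \subset nbhd e C by apply: subsetDl.
rewrite leq_eqVlt ltnS => /orP[/cards2P[x [y [xy K_xy]]] | K_le1]; last first.
  apply: tw_le_add1_tidy tidyX _ _ K_le1; first by case: compC.
  by rewrite -[X]setCK; apply: subset_trans K_N (nbhd_component_sub compC).
have [xN yN] : x \in nbhd e C /\ y \in nbhd e C.
  by rewrite !(subsetP K_N) // K_xy !inE eqxx ?orbT.
case: (pairs x y xN yN xy) => [|/(_ S solS)]; first by rewrite -K_xy.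
by rewrite -K_xy setDDl setUid -/K K_xy cards2 xy.
Qed.

Hypothesis e_sym : symmetric e.

Lemma solution_extend (C S : {set T}) t :
  solution e (~: C) t S -> #|nbhd e C :\: S| <= 2 -> clique e (nbhd e C :\: S) ->
  tw_le e (C :|: (nbhd e C :\: S)) 2 -> solution e [set: T] t S.
Proof.
move=> [_ S_card tw_rest] K_card K_clique tw_CK.
set K := nbhd e C :\: S in K_card K_clique tw_CK.
split=> //.
have rest_CK : (~: C :\: S) :&: (C :|: K) = K.
  by apply/setP => x; rewrite !inE; case: (x \in C) (x \in S) => [] [].
apply: tw_le_subset (tw_le_clique_sum e_sym tw_rest tw_CK _ _ _) _;
  rewrite ?rest_CK //; last first.
  by apply/subsetP => x; rewrite !inE; case: (x \in C) (x \in S) => [] [].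
move=> u v /setDP[/setDP[uC uS] uCK] /setDP[vCK vR].
have vC : v \in C by move: vCK vR; rewrite !inE; case: (v \in C) (v \in S) => [] [].
rewrite inE in uC; apply: contra uCK => uv; rewrite !inE uS (negbTE uC) /=.
by apply/existsP; exists v; rewrite vC e_sym.
Qed.

End Reduction.

Theorem mainTheorem7 (T : finType) (e : rel T)
  (e_sym : symmetric e) (e_irr : irreflexive e)
  (t : nat) (X C : {set T}) :
  tidy_modulator e X ->
  component_of e (~: X) C ->
  limit_clique e (~: C) t 2 (nbhd e C) ->
  (forall x y, x \in nbhd e C -> y \in nbhd e C -> x != y ->
     tw_le e (C :|: [set x; y]) 2 \/ limit_subset e (~: C) t 1 [set x; y]) ->
  ((exists S, solution e [set: T] t S) <-> (exists S, solution e (~: C) t S)).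
Proof.
move=> tidyX compC [N_limit N_clique] pairs; split=> [[S solS] | [S solS]].
  by exists (S :&: ~: C); apply: solution_restrict solS; apply: subsetT.
have K_card : #|nbhd e C :\: S| <= 2 := N_limit S solS.
exists S; apply: (solution_extend e_sym solS K_card).
  by move=> u v /setDP[uN _] /setDP[vN _]; apply: N_clique.
exact: tw_le_component_nbhd_rest tidyX compC solS K_card pairs.
Qed.
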